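(* Let $\mathcal{X}$ be a finite set, $\underline{Q}$ a lower transition rate operator on $\mathcal{L}(\mathcal{X})$ and $(\underline{Q}_n)_{n\in\mathbb{N}}$ a sequence of lower transition rate operators on $\mathcal{L}(\mathcal{X})$. Then $\|\underline{Q}_n-\underline{Q}\|\to0$ if and only if $\underline{Q}_nf\to\underline{Q}f$ for every $f\in\mathcal{L}(\mathcal{X})$.
   Context: $\mathcal{L}(\mathcal{X})$ is the set of real-valued functions on $\mathcal{X}$ with pointwise operations and order, real constants identified with constant functions, $\mathbb{I}_y$ the indicator of $\{y\}$, and maximum norm $\|f\|=\max_x|f(x)|$; for non-negatively homogeneous operators $A$, $\|A\|\coloneqq\sup\{\|Af\|\colon\|f\|=1\}$. A lower transition rate operator is a map $\underline{Q}\colon\mathcal{L}(\mathcal{X})\to\mathcal{L}(\mathcal{X})$ such that for all $f,g$, $\lambda\ge0$, $\mu\in\mathbb{R}$, $x,y\in\mathcal{X}$: $\underline{Q}(\mu)=0$; $\underline{Q}(f+g)\ge\underline{Q}f+\underline{Q}g$; $\underline{Q}(\lambda f)=\lambda\underline{Q}f$; $x\ne y\Rightarrow\underline{Q}(\mathbb{I}_y)(x)\ge0$. *)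

From mathcomp Require Import all_boot all_order all_algebra.
From mathcomp Require Import all_classical all_reals all_analysis.
Set Implicit Arguments. Unset Strict Implicit. Unset Printing Implicit Defensive.
Import Order.TTheory GRing.Theory Num.Theory.
Local Open Scope ring_scope.
Local Open Scope classical_set_scope.

Definition gamble (R : realType) (X : finType) := X -> R.

Definition maxnorm (R : realType) (X : finType) (f : X -> R) : R :=
  \big[Num.max/0]_(x : X) `|f x|.

Definition indic (R : realType) (X : finType) (y : X) : X -> R :=
  fun z => if z == y then 1 else 0.

Definition opnorm (R : realType) (X : finType) (A : (X -> R) -> (X -> R)) : R :=
  sup [set r : R | exists f : X -> R, maxnorm f = 1 /\ r = maxnorm (A f)].

Definition opsub (R : realType) (X : finType) (A B : (X -> R) -> (X -> R))
  : (X -> R) -> (X -> R) := fun f x => A f x - B f x.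

Definition lower_rate_op (R : realType) (X : finType)
  (Q : (X -> R) -> (X -> R)) : Prop :=
  [/\ (forall mu : R, Q (fun _ => mu) = (fun _ => 0)),
      (forall f g : X -> R, forall x, Q f x + Q g x <= Q (fun z => f z + g z) x),
      (forall (lam : R) (f : X -> R), 0 <= lam ->
          Q (fun z => lam * f z) = (fun x => lam * Q f x)) &
      (forall x y : X, x != y -> 0 <= Q (indic R y) x)].

From Pilot Require Import Defs.
From mathcomp Require Import all_boot all_order all_algebra.
From mathcomp Require Import all_classical all_reals all_analysis.
From mathcomp Require Import ring lra.
Import Order.TTheory GRing.Theory Num.Theory.
Local Open Scope ring_scope.
Local Open Scope classical_set_scope.
Set Implicit Arguments. Unset Strict Implicit.

(* Writing f + 1 >= 0 as a nonnegative
   combination of indicators bounds Q on the unit ball by twice the total mass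
   m(Q) of the values Q I_y, and superadditivity turns this bound into a
   Lipschitz estimate with the same constant. Norm convergence implies
   pointwise convergence by homogeneity. Conversely, pointwise convergence on
   the indicators bounds m(Q_n) uniformly in n, so pointwise convergence on the
   finitely many points of a 1/K-grid of the unit ball extends to uniform
   convergence on the whole ball. *)

Section MaxNorm.
Variables (R : realType) (X : finType).
Implicit Types f : X -> R.

Lemma maxnorm_ge0 f : 0 <= maxnorm f.
Proof. by rewrite /maxnorm; elim/big_ind: _ => // a b a0 b0; rewrite le_max a0. Qed.

Lemma ler_maxnorm f x : `|f x| <= maxnorm f.
Proof. exact: (le_bigmax 0 (fun x => `|f x|) x). Qed.

Lemma maxnorm_le f c : 0 <= c -> (forall x, `|f x| <= c) -> maxnorm f <= c.
Proof. by move=> c0 fc; apply: bigmax_le => // x _; apply: fc. Qed.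

Lemma maxnorm_eq0 f : maxnorm f = 0 -> f = (fun _ => 0).
Proof.
move=> f0; apply: funext => x; apply/eqP; rewrite -normr_eq0 eq_le normr_ge0.
by rewrite -f0 ler_maxnorm.
Qed.

Lemma maxnormZ f k : 0 <= k -> maxnorm (fun x => k * f x) = k * maxnorm f.
Proof.
move=> k0; rewrite /maxnorm; elim/big_rec2: _ => [|x a b _ ->]; first by rewrite mulr0.
by rewrite maxr_pMr // normrM (ger0_norm k0).
Qed.

End MaxNorm.

Section OperatorNorm.
Variables (R : realType) (X : finType) (T : (X -> R) -> (X -> R)).

Lemma opnorm_le eps :
  0 <= eps -> (forall g, maxnorm g = 1 -> maxnorm (T g) <= eps) -> opnorm T <= eps.
Proof.
move=> eps0 Teps; rewrite /opnorm; set S := [set r | _].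
have [[r Sr]|S0] := pselect (S !=set0).
  by apply: ge_sup; [exists r | move=> _ [g [g1 ->]]; apply: Teps].
suff -> : S = set0 by rewrite sup0.
by apply/seteqP; split => // r Sr; apply: S0; exists r.
Qed.

Lemma opnorm_ge0 M : (forall g, maxnorm g = 1 -> maxnorm (T g) <= M) -> 0 <= opnorm T.
Proof.
move=> TM; rewrite /opnorm; set S := [set r | _].
have [[_ [g [g1 _]]]|S0] := pselect (S !=set0).
  apply: le_trans (maxnorm_ge0 (T g)) _; apply: ub_le_sup; last by exists g.
  by exists M => _ [h [h1 ->]]; apply: TM.
suff -> : S = set0 by rewrite sup0.
by apply/seteqP; split => // r Sr; apply: S0; exists r.
Qed.

Hypothesis T_homog : forall (lam : R) (f : X -> R), 0 <= lam ->
  T (fun z => lam * f z) = (fun x => lam * T f x).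

Lemma maxnorm_le_opnorm M f : (forall g, maxnorm g = 1 -> maxnorm (T g) <= M) ->
  maxnorm (T f) <= maxnorm f * opnorm T.
Proof.
move=> TM; have [f0|f_neq0] := eqVneq (maxnorm f) 0.
  have f_eq : (fun z => 0 * f z) = f.
    by rewrite (maxnorm_eq0 f0); apply: funext => z; rewrite mul0r.
  by rewrite -{1}f_eq T_homog // maxnormZ // f0 !mul0r.
have fpos : 0 < maxnorm f by rewrite lt_neqAle eq_sym f_neq0 maxnorm_ge0.
pose h z := (maxnorm f)^-1 * f z.
have Tf : T f = (fun x => maxnorm f * T h x).
  rewrite -T_homog ?maxnorm_ge0 //; congr T; apply: funext => z.
  by rewrite /h mulrA mulfV // mul1r.
have h1 : maxnorm h = 1 by rewrite maxnormZ ?invr_ge0 ?maxnorm_ge0 // mulVf.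
rewrite Tf maxnormZ ?maxnorm_ge0 // ler_wpM2l ?maxnorm_ge0 // /opnorm.
apply: ub_le_sup; last by exists h.
by exists M => _ [g [g1 ->]]; apply: TM.
Qed.

End OperatorNorm.

Definition indic_mass (R : realType) (X : finType) (Q : (X -> R) -> (X -> R)) : R :=
  \sum_(x : X) \sum_(y : X) `|Q (Defs.indic R y) x|.

Lemma indic_mass_ge0 (R : realType) (X : finType) (Q : (X -> R) -> (X -> R)) :
  0 <= indic_mass Q.
Proof. by apply: sumr_ge0 => x _; apply: sumr_ge0. Qed.

Lemma indic_mass_le (R : realType) (X : finType) (A Q : (X -> R) -> (X -> R)) :
  (forall y x, `|A (Defs.indic R y) x - Q (Defs.indic R y) x| <= 1) ->
  indic_mass A <= indic_mass Q + (#|X| * #|X|)%:R.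
Proof.
move=> AQ; have -> : (#|X| * #|X|)%:R = \sum_(x : X) \sum_(y : X) 1 :> R.
  by rewrite !sumr_const -mulrnA.
rewrite /indic_mass -big_split; apply: ler_sum => x _.
rewrite -big_split; apply: ler_sum => y _.
have := ler_distD (Q (Defs.indic R y) x) (A (Defs.indic R y) x) 0.
by rewrite !subr0 addrC => /le_trans; apply; rewrite /= lerD2l.
Qed.

Section SuperlinearOperator.
Variables (R : realType) (X : finType) (Q : (X -> R) -> (X -> R)).
Hypothesis Q_cst : forall mu : R, Q (fun _ => mu) = (fun _ => 0).
Hypothesis Q_superadd : forall f g : X -> R, forall x,
  Q f x + Q g x <= Q (fun z => f z + g z) x.
Hypothesis Q_homog : forall (lam : R) (f : X -> R), 0 <= lam ->
  Q (fun z => lam * f z) = (fun x => lam * Q f x).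

Lemma Q_shift f c x : Q (fun z => f z + c) x = Q f x.
Proof.
apply/eqP; rewrite eq_le; apply/andP; split; last first.
  by have := Q_superadd f (fun _ => c) x; rewrite Q_cst addr0.
have := Q_superadd (fun z => f z + c) (fun _ => - c) x.
have -> : (fun z => f z + c + - c) = f by apply: funext => z; rewrite addrK.
by rewrite Q_cst addr0.
Qed.

Lemma Q_le_oppN f x : Q f x <= - Q (fun z => - f z) x.
Proof.
have := Q_superadd f (fun z => - f z) x.
have -> : (fun z => f z + - f z) = (fun _ => 0) by apply: funext => z; rewrite subrr.
by rewrite Q_cst; lra.
Qed.

Lemma Q_sum_superadd (I : Type) (s : seq I) (F : I -> X -> R) x :
  \sum_(i <- s) Q (F i) x <= Q (fun z => \sum_(i <- s) F i z) x.
Proof.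
elim: s => [|i s IHs].
  have -> : (fun z => \sum_(i <- [::]) F i z) = (fun _ => 0).
    by apply: funext => z; rewrite big_nil.
  by rewrite Q_cst big_nil.
have -> : (fun z => \sum_(j <- i :: s) F j z) = (fun z => F i z + \sum_(j <- s) F j z).
  by apply: funext => z; rewrite big_cons.
by rewrite big_cons; apply: le_trans (Q_superadd _ _ x); rewrite lerD2l.
Qed.

Lemma sum_indic_le f x : (forall y, 0 <= f y) ->
  \sum_(y : X) f y * Q (Defs.indic R y) x <= Q f x.
Proof.
move=> f0; have f_sum : (fun z => \sum_(y : X) f y * Defs.indic R y z) = f.
  apply: funext => z; rewrite (bigD1 z) //= big1 => [|y yz].
    by rewrite /Defs.indic eqxx mulr1 addr0.
  by rewrite /Defs.indic eq_sym (negbTE yz) mulr0.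
rewrite -[X in _ <= Q X x]f_sum; apply: le_trans (Q_sum_superadd _ _ x).
by apply: ler_sum => y _; rewrite Q_homog.
Qed.

Lemma Q_ge_indic_mass f x : (forall y, `|f y| <= 1) ->
  - (2 * \sum_(y : X) `|Q (Defs.indic R y) x|) <= Q f x.
Proof.
move=> f1; rewrite -(Q_shift f 1 x).
apply: le_trans (sum_indic_le _ _); last first.
  by move=> y; have := f1 y; rewrite ler_norml; lra.
rewrite mulr_sumr -sumrN; apply: ler_sum => y _.
have := f1 y; rewrite ler_norml => /andP[fy_lo fy_hi].
set q := Q (Defs.indic R y) x.
have /andP[q_lo q_hi] : - `|q| <= q <= `|q| by rewrite -ler_norml.
nra.
Qed.

Lemma norm_Q_le f x : (forall y, `|f y| <= 1) -> `|Q f x| <= 2 * indic_mass Q.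
Proof.
move=> f1; have row_le : \sum_(y : X) `|Q (Defs.indic R y) x| <= indic_mass Q.
  rewrite /indic_mass [X in _ <= X](bigD1 x) //= lerDl.
  by apply: sumr_ge0 => z _; apply: sumr_ge0.
have lo := Q_ge_indic_mass x f1.
have f1N y : `|- f y| <= 1 by rewrite normrN.
have hi := Q_ge_indic_mass x f1N.
have := Q_le_oppN f x; rewrite ler_norml; lra.
Qed.

Lemma Q_lipschitz f g d x : 0 < d -> (forall z, `|f z - g z| <= d) ->
  `|Q f x - Q g x| <= 2 * d * indic_mass Q.
Proof.
move=> d0 fg; pose h z := (f z - g z) / d.
have h1 z : `|h z| <= 1.
  by rewrite normrM normfV (gtr0_norm d0) ler_pdivrMr // mul1r.
have f_gh : f = (fun z => g z + d * h z).
  by apply: funext => z; rewrite /h mulrC divfK ?gt_eqF // addrC subrK.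
have g_fh : g = (fun z => f z + d * - h z).
  by apply: funext => z; rewrite /h mulrN mulrC divfK ?gt_eqF // subKr.
have up : Q g x + d * Q h x <= Q f x.
  by have := Q_superadd g (fun z => d * h z) x; rewrite -f_gh Q_homog // ltW.
have down : Q f x + d * Q (fun z => - h z) x <= Q g x.
  by have := Q_superadd f (fun z => d * - h z) x; rewrite -g_fh Q_homog // ltW.
have := norm_Q_le x h1; rewrite ler_norml => /andP[b1 b2].
have h1N z : `|- h z| <= 1 by rewrite normrN.
have := norm_Q_le x h1N; rewrite ler_norml => /andP[b3 b4].
rewrite ler_norml; apply/andP; split; nra.
Qed.

End SuperlinearOperator.

Lemma maxnorm_opsub_unit_le (R : realType) (X : finType) (A Q : (X -> R) -> (X -> R)) g :
  lower_rate_op A -> lower_rate_op Q -> maxnorm g = 1 ->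
  maxnorm (opsub A Q g) <= 2 * (indic_mass A + indic_mass Q).
Proof.
move=> [A0 Aadd Ahom _] [Q0 Qadd Qhom _] g1.
have g_le1 y : `|g y| <= 1 by rewrite -g1 ler_maxnorm.
apply: maxnorm_le => [|x]; first by rewrite mulr_ge0 ?addr_ge0 ?indic_mass_ge0.
apply: le_trans (ler_normB _ _) _; rewrite mulrDr.
by rewrite lerD // norm_Q_le.
Qed.

Section Grid.
Variables (R : realType) (X : finType) (K : nat).

Definition grid (i : {ffun X -> 'I_(2 * K).+1}) : X -> R :=
  fun x => (i x)%:R / K%:R - 1.

Lemma grid_approx (g : X -> R) : (0 < K)%N -> (forall y, `|g y| <= 1) ->
  exists i, forall x, `|g x - grid i x| <= K%:R^-1.
Proof.
move=> K0 g1; have Kpos : 0 < K%:R :> R by rewrite ltr0n.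
pose t x := (g x + 1) * K%:R.
have t_ge0 x : 0 <= t x.
  by have := g1 x; rewrite ler_norml => /andP[a b]; apply: mulr_ge0; lra.
have t_le x : t x <= (2 * K)%:R.
  by have := g1 x; rewrite ler_norml natrM /t => /andP[a b]; nra.
exists [ffun x => inord (Num.truncn (t x))] => x.
have /andP[lo hi] := truncn_itv (t_ge0 x).
have le2K : (Num.truncn (t x) <= 2 * K)%N.
  by rewrite -(ler_nat R); apply: le_trans lo (t_le x).
rewrite /grid ffunE inordK ?ltnS //; set m : R := (Num.truncn (t x))%:R.
rewrite -natr1 -/m in hi.
have -> : g x - (m / K%:R - 1) = (t x - m) / K%:R by rewrite /t; field; rewrite gt_eqF.
rewrite normrM normfV (gtr0_norm Kpos) ler_pdivrMr // mulVf ?gt_eqF //.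
by rewrite ler_norml; apply/andP; split; lra.
Qed.

End Grid.

Lemma maxnorm_opsub_le_grid (R : realType) (X : finType) (A Q : (X -> R) -> (X -> R))
    (K : nat) (e1 e2 : R) :
  lower_rate_op A -> lower_rate_op Q -> (0 < K)%N ->
  2 * (indic_mass A + indic_mass Q) / K%:R <= e1 ->
  (forall i : {ffun X -> 'I_(2 * K).+1},
     maxnorm (fun x => A (grid R i) x - Q (grid R i) x) <= e2) ->
  forall g, (forall y, `|g y| <= 1) -> maxnorm (opsub A Q g) <= e1 + e2.
Proof.
move=> [A0 Aadd Ahom _] [Q0 Qadd Qhom _] K0 mass_e1 grid_e2 g g1.
have [i gi] := grid_approx K0 g1.
have Kinv_pos : 0 < K%:R^-1 :> R by rewrite invr_gt0 ltr0n.
have e1_ge0 : 0 <= e1.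
  by apply: le_trans mass_e1; rewrite !mulr_ge0 ?addr_ge0 ?indic_mass_ge0 ?invr_ge0.
have e2_ge0 : 0 <= e2 by apply: le_trans (grid_e2 i); apply: maxnorm_ge0.
apply: maxnorm_le => [|x]; first by rewrite addr_ge0.
have lipA := Q_lipschitz A0 Aadd Ahom x Kinv_pos gi.
have lipQ := Q_lipschitz Q0 Qadd Qhom x Kinv_pos gi.
have close := le_trans (ler_maxnorm _ x) (grid_e2 i); rewrite /= in close.
have split3 : `|A g x - Q g x| <= `|A g x - A (grid R i) x| +
    `|A (grid R i) x - Q (grid R i) x| + `|Q g x - Q (grid R i) x|.
  rewrite (distrC (Q g x)); apply: le_trans (ler_distD (Q (grid R i) x) _ _) _.
  by rewrite lerD2r ler_distD.
move: mass_e1; rewrite mulrAC; lra.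
Qed.

Lemma exists_nat_div_le (R : realType) (a e : R) : 0 <= a -> 0 < e ->
  exists K : nat, (0 < K)%N /\ a / K%:R <= e.
Proof.
move=> a0 e0; have /andP[_ hi] := truncn_itv (divr_ge0 a0 (ltW e0)).
exists (Num.truncn (a / e)).+1; split => //.
by rewrite ler_pdivrMr ?ltr0n // mulrC ltW // -ltr_pdivrMr.
Qed.

Lemma opnorm_cvg_pointwise (R : realType) (X : finType)
    (Q : (X -> R) -> (X -> R)) (Qn : nat -> (X -> R) -> (X -> R)) :
  lower_rate_op Q -> (forall n, lower_rate_op (Qn n)) ->
  (fun n => opnorm (opsub (Qn n) Q)) @ \oo --> 0 ->
  forall f, (fun n => maxnorm (fun x => Qn n f x - Q f x)) @ \oo --> 0.
Proof.
move=> HQ HQn Qn_Q f.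
apply: (@squeeze_cvgr _ _ _ _ (fun=> 0) (fun n => maxnorm f * opnorm (opsub (Qn n) Q))).
- apply: nearW => n; rewrite maxnorm_ge0 /=.
  have [_ _ Ahom _] := HQn n; have [_ _ Qhom _] := HQ.
  have T_homog (lam : R) (h : X -> R) : 0 <= lam ->
      opsub (Qn n) Q (fun z => lam * h z) = (fun x => lam * opsub (Qn n) Q h x).
    by move=> lam0; apply: funext => x; rewrite /opsub Ahom // Qhom // mulrBr.
  exact: (maxnorm_le_opnorm T_homog f (fun g g1 => maxnorm_opsub_unit_le (HQn n) HQ g1)).
- exact: (@cvg_cst R^o).
- by rewrite -(mulr0 (maxnorm f)); apply: cvgMl_tmp.
Qed.

Lemma pointwise_cvg_opnorm (R : realType) (X : finType)
    (Q : (X -> R) -> (X -> R)) (Qn : nat -> (X -> R) -> (X -> R)) :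
  lower_rate_op Q -> (forall n, lower_rate_op (Qn n)) ->
  (forall f, (fun n => maxnorm (fun x => Qn n f x - Q f x)) @ \oo --> 0) ->
  (fun n => opnorm (opsub (Qn n) Q)) @ \oo --> 0.
Proof.
move=> HQ HQn Qn_Q; apply/cvgrPdist_le => eps eps0.
have near_close f e : 0 < e -> \forall n \near \oo, maxnorm (fun x => Qn n f x - Q f x) <= e.
  move=> e0; have /cvgrPdist_le /(_ e e0) := Qn_Q f; apply: filterS => n.
  by rewrite sub0r normrN ger0_norm ?maxnorm_ge0.
have eps2 : 0 < eps / 2 by rewrite divr_gt0.
have mass0 : 0 <= 2 * (2 * indic_mass Q + (#|X| * #|X|)%:R).
  by rewrite mulr_ge0 // addr_ge0 ?mulr_ge0 ?indic_mass_ge0.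
have [K [K0 massK]] := exists_nat_div_le mass0 eps2.
have indic_close : \forall n \near \oo, forall y,
    maxnorm (fun x => Qn n (Defs.indic R y) x - Q (Defs.indic R y) x) <= 1.
  by apply: filter_forall => y; apply: near_close.
have grid_close : \forall n \near \oo, forall i : {ffun X -> 'I_(2 * K).+1},
    maxnorm (fun x => Qn n (grid R i) x - Q (grid R i) x) <= eps / 2.
  by apply: filter_forall => i; apply: near_close.
apply: filterS2 indic_close grid_close => n Qn_indic Qn_grid.
have unit_eps g : maxnorm g = 1 -> maxnorm (opsub (Qn n) Q g) <= eps.
  move=> g1; rewrite (splitr eps).
  apply: (maxnorm_opsub_le_grid (HQn n) HQ K0) => [||y]; last 2 first.
  - exact: Qn_grid.
  - by rewrite -g1 ler_maxnorm.
  apply: le_trans massK; rewrite ler_wpM2r ?invr_ge0 // ler_wpM2l //.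
  suff : indic_mass (Qn n) <= indic_mass Q + (#|X| * #|X|)%:R by lra.
  apply: indic_mass_le => y x; apply: le_trans _ (Qn_indic y).
  exact: (ler_maxnorm (fun z => Qn n (Defs.indic R y) z - Q (Defs.indic R y) z)).
by rewrite sub0r normrN ger0_norm ?(opnorm_ge0 unit_eps) // opnorm_le // ltW.
Qed.

Theorem proposition5 (R : realType) (X : finType)
  (Q : (X -> R) -> (X -> R)) (Qn : nat -> (X -> R) -> (X -> R)) :
  lower_rate_op Q -> (forall n, lower_rate_op (Qn n)) ->
  ((fun n => opnorm (opsub (Qn n) Q)) @ \oo --> 0) <->
  (forall f : X -> R, (fun n => maxnorm (fun x => Qn n f x - Q f x)) @ \oo --> 0).
Proof.
move=> HQ HQn; split; first exact: opnorm_cvg_pointwise.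
exact: pointwise_cvg_opnorm.
Qed.
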